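(* Let $(f_t(x))_{t\in[0,1]}$ be a smooth family of strictly positive probability densities on $\mathbb R$, and suppose there exist a constant $v$ and a non-decreasing continuously differentiable function $\alpha:[0,1]\to\mathbb R$ such that, with $$g_t(x):=vf_t(x)+\alpha(t)\frac{\partial f_t}{\partial x}(x),$$ we have $\frac{\partial f_t}{\partial t}=-\frac{\partial g_t}{\partial x}$. Let $$h_t(x):=v^2f_t(x)+2v\alpha(t)\frac{\partial f_t}{\partial x}(x)+\alpha(t)^2\frac{\partial^2 f_t}{\partial x^2}(x)-\alpha'(t)f_t(x).$$ Assume the following technical conditions: (a) there exist integrable $\theta_A,\theta_B$ with $\left|\frac{\partial g_t}{\partial x}(1+\log f_t)\right|\le\theta_A(x)$ and $\left|\frac{\partial^2 h_t}{\partial x^2}\log f_t+\left(\frac{\partial g_t}{\partial x}\right)^2\frac1{f_t}\right|\le\theta_B(x)$ for all $t,x$; (b) for each $t$ the functions $g_t$, $\frac{\partial h_t}{\partial x}\log f_t$, $\frac{h_t}{f_t}\frac{\partial f_t}{\partial x}$, $\left(\frac{g_t}{f_t}\right)^2\frac{\partial f_t}{\partial x}$ vanish as $x\to\pm\infty$; and the entropy $H(t)=-\int f_t\log f_t\,dx$ exists for all $t$. Then $H$ is a concave function of $t$ on $[0,1]$. *)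

From Stdlib Require Import Reals Lra Classical ClassicalEpsilon.
Open Scope R_scope.

(* Classical derivative operator: the derivative of f at x if it exists, 0 otherwise. *)
Definition deriv (f : R -> R) (x : R) : R :=
  match excluded_middle_informative (exists l, derivable_pt_lim f x l) with
  | left H => proj1_sig (constructive_indefinite_description _ H)
  | right _ => 0
  end.

Definition pt (F : R -> R -> R) (t x : R) : R := deriv (fun s => F s x) t.
Definition px (F : R -> R -> R) (t x : R) : R := deriv (fun y => F t y) x.

Definition cont2 (F : R -> R -> R) : Prop :=
  forall t x eps, 0 < eps -> exists delta, 0 < delta /\
    forall s y, Rabs (s - t) < delta -> Rabs (y - x) < delta ->
      Rabs (F s y - F t x) < eps.

(* C^infinity on R^2: jointly continuous, both partials exist everywhere,
   and the partials are again C^infinity. *)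
CoInductive smooth2 : (R -> R -> R) -> Prop :=
| Smooth2 : forall F : R -> R -> R,
    cont2 F ->
    (forall t x, derivable_pt_lim (fun s => F s x) t (pt F t x)) ->
    (forall t x, derivable_pt_lim (fun y => F t y) x (px F t x)) ->
    smooth2 (pt F) -> smooth2 (px F) -> smooth2 F.

Definition C1_on_R (a : R -> R) : Prop :=
  (forall t, derivable_pt_lim a t (deriv a t)) /\ continuity (deriv a).

(* Integrability over R (absolute, improper Riemann): locally Riemann
   integrable, and the integrals of |f| over bounded intervals are bounded. *)
Definition integrable_R (f : R -> R) : Prop :=
  (forall a b, inhabited (Riemann_integrable f a b)) /\
  exists M, forall a b (pr : Riemann_integrable (fun x => Rabs (f x)) a b),
    a <= b -> RiemannInt pr <= M.

Definition integral_R (f : R -> R) (l : R) : Prop :=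
  forall eps, 0 < eps -> exists M, forall a b (pr : Riemann_integrable f a b),
    a <= - M -> M <= b -> Rabs (RiemannInt pr - l) < eps.

Definition vanishes_at_infty (phi : R -> R) : Prop :=
  forall eps, 0 < eps -> exists M, forall x, M <= Rabs x -> Rabs (phi x) < eps.

Definition concave_on_01 (H : R -> R) : Prop :=
  forall s t l, 0 <= s <= 1 -> 0 <= t <= 1 -> 0 <= l <= 1 ->
    l * H s + (1 - l) * H t <= H (l * s + (1 - l) * t).

(* Let E_{a,b}(t) = ∫_a^b -f_t ln f_t be the entropy truncated to [a, b].  For
   0 < t < 1 one may differentiate under the integral sign and, by the PDE
   ∂_t f = -∂_x g, obtain E_{a,b}'(t) = ∫_a^b rho_t with rho = ∂_x g (1 + ln f).
   Integrating by parts, ∫_a^b rho_t = [g_t]_a^b + ∫_a^b kappa_t with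
   kappa = ∂_x g ln f, and d/dt ∫_a^b kappa_t = ∫_a^b psi_t with
   psi = -(∂_x² h ln f + (∂_x g)² / f).  The key computation is psi <= ∂_x Q for an
   explicit boundary function Q, the difference being
   2 alpha² f (∂_x² f / f - (∂_x f / f)²)² + alpha' (∂_x f)² / f >= 0.  Since each
   f_t is a density, ∂_x f_t is small at points arbitrarily far out, where Q_t is
   then small; together with the tail bounds given by thetaA and thetaB, this
   shows that the slope E_{a,b}' is nonincreasing up to an arbitrarily small
   error, uniformly in t, once [a, b] is large.  The mean value theorem then makes
   E_{a,b} almost concave, and letting [a, b] grow gives the concavity of H. *)

From Stdlib Require Import Reals Lra Classical ClassicalEpsilon FunctionalExtensionality.
From Coquelicot Require Import Coquelicot.
Open Scope R_scope.

Lemma deriv_unique (F : R -> R) x l : derivable_pt_lim F x l -> deriv F x = l.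
Proof.
  intro Hl. unfold deriv.
  destruct (excluded_middle_informative _) as [Hex | Hnex].
  - destruct (constructive_indefinite_description _ Hex) as [l' Hl']; simpl.
    exact (uniqueness_limite F x l' l Hl' Hl).
  - exfalso; apply Hnex; eauto.
Qed.

Lemma cont2_continuity_2d (F : R -> R -> R) t x : cont2 F -> continuity_2d_pt F t x.
Proof.
  intros HF eps. destruct (HF t x eps (cond_pos eps)) as [d [Hd Hd']].
  exists (mkposreal d Hd). intros s y Hs Hy. now apply Hd'.
Qed.

Lemma ex_derive_continuity_pt (F : R -> R) x : ex_derive F x -> continuity_pt F x.
Proof. intro H. apply continuity_pt_filterlim. apply (ex_derive_continuous F x H). Qed.

Section Smooth2.
Variable F : R -> R -> R.
Hypothesis HF : smooth2 F.

Lemma smooth2_inv : cont2 F /\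
  (forall t x, derivable_pt_lim (fun s => F s x) t (pt F t x)) /\
  (forall t x, derivable_pt_lim (fun y => F t y) x (px F t x)) /\
  smooth2 (pt F) /\ smooth2 (px F).
Proof. inversion HF; subst; tauto. Qed.

Lemma smooth2_continuity_2d t x : continuity_2d_pt F t x.
Proof. apply cont2_continuity_2d, smooth2_inv. Qed.
Lemma smooth2_pt : smooth2 (pt F). Proof. apply smooth2_inv. Qed.
Lemma smooth2_px : smooth2 (px F). Proof. apply smooth2_inv. Qed.

Lemma smooth2_is_derive_t t x : is_derive (fun s => F s x) t (pt F t x).
Proof. apply is_derive_Reals, smooth2_inv. Qed.
Lemma smooth2_is_derive_x t x : is_derive (fun y => F t y) x (px F t x).
Proof. apply is_derive_Reals, smooth2_inv. Qed.
Lemma smooth2_Derive_t t x : Derive (fun s => F s x) t = pt F t x.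
Proof. apply is_derive_unique, smooth2_is_derive_t. Qed.
Lemma smooth2_Derive_x t x : Derive (fun y => F t y) x = px F t x.
Proof. apply is_derive_unique, smooth2_is_derive_x. Qed.
Lemma smooth2_ex_t t x : ex_derive (fun s => F s x) t.
Proof. eexists; apply smooth2_is_derive_t. Qed.
Lemma smooth2_ex_x t x : ex_derive (fun y => F t y) x.
Proof. eexists; apply smooth2_is_derive_x. Qed.
End Smooth2.

Lemma smooth2_schwarz (F : R -> R -> R) t x : smooth2 F -> pt (px F) t x = px (pt F) t x.
Proof.
  intro HF.
  assert (Htx : forall u w, Derive (fun z => Derive (fun y => F z y) w) u = pt (px F) u w).
  { intros u w. rewrite (Derive_ext _ (fun z => px F z w)) by (intro; apply smooth2_Derive_x, HF).
    apply smooth2_Derive_t, smooth2_px, HF. }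
  assert (Hxt : forall u w, Derive (fun z => Derive (fun y => F y z) u) w = px (pt F) u w).
  { intros u w. rewrite (Derive_ext _ (fun z => pt F u z)) by (intro; apply smooth2_Derive_t, HF).
    apply smooth2_Derive_x, smooth2_pt, HF. }
  rewrite <- Htx, <- Hxt. apply Schwarz.
  - exists (mkposreal 1 Rlt_0_1). intros u w _ _. repeat split.
    + apply smooth2_ex_t, HF.
    + apply smooth2_ex_x, HF.
    + apply (ex_derive_ext (fun z => px F z w)).
      { intro; symmetry; apply smooth2_Derive_x, HF. }
      apply smooth2_ex_t, smooth2_px, HF.
    + apply (ex_derive_ext (fun z => pt F u z)).
      { intro; symmetry; apply smooth2_Derive_t, HF. }
      apply smooth2_ex_x, smooth2_pt, HF.
  - apply continuity_2d_pt_ext with (f := pt (px F)).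
    { intros; symmetry; apply Htx. }
    apply smooth2_continuity_2d, smooth2_pt, smooth2_px, HF.
  - apply continuity_2d_pt_ext with (f := px (pt F)).
    { intros; symmetry; apply Hxt. }
    apply smooth2_continuity_2d, smooth2_px, smooth2_pt, HF.
Qed.

(* A function nondecreasing on [a, b] has a nonnegative derivative inside:
   its right difference quotients are nonnegative. *)
Lemma derivative_nonneg_of_nondecreasing (F : R -> R) a b u l :
  a < u < b -> (forall s t, a <= s <= b -> a <= t <= b -> s <= t -> F s <= F t) ->
  derivable_pt_lim F u l -> 0 <= l.
Proof.
  intros Hu Hmono Hl. apply Rnot_lt_le. intro Hneg.
  destruct (Hl (- l) ltac:(lra)) as [d Hd].
  set (k := Rmin (d / 2) ((b - u) / 2)).
  assert (Hk : 0 < k) by (unfold k; apply Rmin_glb_lt; pose proof (cond_pos d); lra).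
  assert (Hkb : k <= (b - u) / 2) by apply Rmin_r.
  assert (Hkd : k <= d / 2) by apply Rmin_l.
  specialize (Hd k ltac:(lra) ltac:(rewrite Rabs_pos_eq; pose proof (cond_pos d); lra)).
  assert (F u <= F (u + k)) by (apply Hmono; lra).
  assert (0 <= (F (u + k) - F u) / k) by (apply Rdiv_le_0_compat; lra).
  apply Rabs_def2 in Hd. lra.
Qed.

Definition continuous_within (A : R -> R) (P : R -> Prop) (x : R) : Prop :=
  forall eps, 0 < eps -> exists d, 0 < d /\
    forall y, P y -> Rabs (y - x) < d -> Rabs (A y - A x) < eps.

(* Mean value theorem with an interior point, assuming only continuity of A
   within [s, t] at the endpoints: apply the usual one to A composed with the
   projection of R onto [s, t]. *)
Lemma mvt_interior (A D : R -> R) s t : s < t ->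
  (forall x, s < x < t -> is_derive A x (D x)) ->
  (forall x, s <= x <= t -> continuous_within A (fun y => s <= y <= t) x) ->
  exists c, s < c < t /\ A t - A s = D c * (t - s).
Proof.
  intros Hst Hder Hcont.
  set (clamp := fun y => Rmax s (Rmin y t)).
  assert (Hclamp_in : forall y, s <= clamp y <= t).
  { intro y; unfold clamp; split; [apply Rmax_l|].
    apply Rmax_lub; [lra | apply Rmin_r]. }
  assert (Hclamp_id : forall y, s <= y <= t -> clamp y = y).
  { intros y Hy; unfold clamp. rewrite Rmin_left, Rmax_right; lra. }
  assert (Hclamp_lip : forall x y, s <= x <= t -> Rabs (clamp y - x) <= Rabs (y - x)).
  { intros x y Hx. unfold clamp. unfold Rmax, Rmin.
    destruct (Rle_dec y t), (Rle_dec s _); apply Rabs_le; split;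
      pose proof (Rle_abs (y - x)); pose proof (Rle_abs (- (y - x))); rewrite Rabs_Ropp in *; lra. }
  set (B := fun y => A (clamp y)).
  assert (HB : forall y, s <= y <= t -> B y = A y) by (intros; unfold B; f_equal; auto).
  assert (HBder : forall c, s < c < t -> derivable_pt_lim B c (D c)).
  { intros c Hc. apply is_derive_Reals. apply (is_derive_ext_loc A).
    - exists (mkposreal (Rmin (c - s) (t - c)) ltac:(apply Rmin_glb_lt; lra)).
      intros y Hy. symmetry. apply HB.
      unfold ball in Hy; simpl in Hy; unfold AbsRing_ball, abs, minus, plus, opp in Hy; simpl in Hy.
      apply Rabs_def2 in Hy. pose proof (Rmin_l (c - s) (t - c)); pose proof (Rmin_r (c - s) (t - c)). lra.
    - apply Hder, Hc. }
  assert (HBcont : forall x, s <= x <= t -> continuity_pt B x).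
  { intros x Hx eps Heps. destruct (Hcont x Hx eps Heps) as [d [Hd Hd']].
    exists d. split; [exact Hd|]. intros y [_ Hy]. simpl in *. unfold R_dist in *.
    unfold B. rewrite (Hclamp_id x Hx). apply Hd'; [apply Hclamp_in|].
    eapply Rle_lt_trans; [apply Hclamp_lip|]; assumption. }
  set (prB := fun c (P : s < c < t) => exist (fun l => derivable_pt_lim B c l) (D c) (HBder c P)).
  set (prId := fun c (_ : s < c < t) => derivable_pt_id c).
  destruct (MVT B id s t prB prId Hst HBcont) as [c [Pc Hc]].
  { intros; apply derivable_continuous_pt, derivable_pt_id. }
  exists c. split; [exact Pc|].
  rewrite derive_pt_id in Hc. simpl in Hc. unfold id in Hc.
  rewrite <- (HB s), <- (HB t) by lra. lra.
Qed.

Lemma ex_RInt_continuity (F : R -> R) a b :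
  (forall y, Rmin a b <= y <= Rmax a b -> continuity_pt F y) -> ex_RInt F a b.
Proof.
  intro H. apply (@ex_RInt_continuous R_CompleteNormedModule).
  intros z Hz. apply continuity_pt_filterlim, H, Hz.
Qed.

Lemma RInt_Chasles_R (F : R -> R) a b c : ex_RInt F a b -> ex_RInt F b c ->
  RInt F a b + RInt F b c = RInt F a c.
Proof. exact (@RInt_Chasles R_CompleteNormedModule F a b c). Qed.

Lemma RInt_derive (Q DQ : R -> R) a b :
  (forall x, Rmin a b <= x <= Rmax a b -> is_derive Q x (DQ x)) ->
  (forall x, Rmin a b <= x <= Rmax a b -> continuity_pt DQ x) ->
  RInt DQ a b = Q b - Q a.
Proof.
  intros Hd Hc. apply is_RInt_unique, (@is_RInt_derive R_CompleteNormedModule Q DQ a b Hd).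
  intros x Hx. apply continuity_pt_filterlim, Hc, Hx.
Qed.

Lemma is_derive_RInt_param_R (phi D : R -> R -> R) a b u e : 0 < e ->
  (forall t y, Rabs (t - u) < e -> is_derive (fun z => phi z y) t (D t y)) ->
  (forall y, continuity_2d_pt D u y) ->
  (forall t y, Rabs (t - u) < e -> continuity_pt (phi t) y) ->
  is_derive (fun t => RInt (phi t) a b) u (RInt (D u) a b).
Proof.
  intros He Hd Hc Hx.
  set (ball_u := mkposreal e He).
  assert (E : RInt (D u) a b = RInt (fun y => Derive (fun z => phi z y) u) a b).
  { apply RInt_ext. intros y _. symmetry. apply is_derive_unique, Hd.
    rewrite Rminus_diag, Rabs_R0; exact He. }
  rewrite E. apply (is_derive_RInt_param phi a b u).
  - exists ball_u. intros t Ht y _. eexists. apply Hd, Ht.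
  - intros y _. apply continuity_2d_pt_ext_loc with (f := D); [|apply Hc].
    exists ball_u. intros t w Ht _. symmetry. apply is_derive_unique, Hd, Ht.
  - exists ball_u. intros t Ht. apply ex_RInt_continuity. intros; apply Hx, Ht.
Qed.

Lemma RInt_param_continuous_within (phi : R -> R -> R) (P : R -> Prop) a b t : a <= b ->
  (forall y, a <= y <= b -> continuity_2d_pt phi t y) ->
  (forall s, P s -> ex_RInt (phi s) a b) -> P t ->
  continuous_within (fun s => RInt (phi s) a b) P t.
Proof.
  intros Hab Hc Hi Pt eps He.
  assert (He' : 0 < eps / 2 / (b - a + 1)) by (apply Rdiv_lt_0_compat; lra).
  destruct (uniform_continuity_2d_1d' phi a b t Hc (mkposreal _ He')) as [d Hd].
  exists d. split; [apply cond_pos|]. intros s Ps Hs.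
  rewrite <- (@RInt_minus R_CompleteNormedModule) by auto.
  eapply Rle_lt_trans; [apply abs_RInt_le_const with (M := eps / 2 / (b - a + 1))|].
  - exact Hab.
  - apply (@ex_RInt_minus R_NormedModule); auto.
  - intros y Hy. left. apply (Hd y t y s); auto.
    + pose proof (cond_pos d); lra.
    + apply Rabs_def2 in Hs. lra.
    + rewrite Rminus_diag, Rabs_R0. apply cond_pos.
  - apply Rle_lt_trans with ((b - a + 1) * (eps / 2 / (b - a + 1))).
    + apply Rmult_le_compat_r; lra.
    + replace ((b - a + 1) * (eps / 2 / (b - a + 1))) with (eps / 2) by (field; lra). lra.
Qed.

Lemma integrable_ex_RInt (th : R -> R) a b : integrable_R th -> ex_RInt th a b.
Proof. intros [H _]. destruct (H a b) as [pr]. apply ex_RInt_Reals_1, pr. Qed.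

Lemma integrable_ex_RInt_abs (th : R -> R) a b :
  integrable_R th -> ex_RInt (fun x => Rabs (th x)) a b.
Proof. intro H. apply (ex_RInt_norm th), integrable_ex_RInt, H. Qed.

Lemma RInt_abs_le_integrable (F th : R -> R) c d : c <= d -> ex_RInt F c d -> integrable_R th ->
  (forall x, c <= x <= d -> Rabs (F x) <= th x) -> Rabs (RInt F c d) <= RInt (fun x => Rabs (th x)) c d.
Proof.
  intros Hcd HF Hth Hdom. eapply Rle_trans; [apply abs_RInt_le; auto|].
  apply RInt_le; auto; [apply (ex_RInt_norm F c d HF) | apply (ex_RInt_norm th), integrable_ex_RInt, Hth|].
  intros x Hx. eapply Rle_trans; [apply Hdom; lra | apply Rle_abs].
Qed.

Lemma integrable_bounded (th : R -> R) : integrable_R th ->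
  exists M, forall c d, c <= d -> RInt (fun x => Rabs (th x)) c d <= M.
Proof.
  intro H. pose proof H as [_ [M HM]]. exists M. intros c d Hcd.
  pose proof (ex_RInt_Reals_0 _ _ _ (integrable_ex_RInt_abs th c d H)) as pr.
  rewrite (RInt_Reals _ _ _ pr). apply HM, Hcd.
Qed.

Lemma integrable_tail (th : R -> R) : integrable_R th -> forall eps, 0 < eps -> exists M, 0 <= M /\
  forall c d, c <= d -> (M <= c \/ d <= - M) -> RInt (fun x => Rabs (th x)) c d <= eps.
Proof.
  intros Hth eps He.
  set (I := fun c d => RInt (fun x => Rabs (th x)) c d).
  assert (Iadd : forall c d e, I c d + I d e = I c e)
    by (intros; apply RInt_Chasles_R; apply integrable_ex_RInt_abs, Hth).
  assert (Ipos : forall c d, c <= d -> 0 <= I c d)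
    by (intros; apply RInt_ge_0; auto; [apply integrable_ex_RInt_abs, Hth | intros; apply Rabs_pos]).
  (* S is the supremum of all I c d; some I c0 d0 comes within eps of it. *)
  set (E := fun y => exists c d, c <= d /\ y = I c d).
  destruct (integrable_bounded th Hth) as [Mb HMb].
  destruct (completeness E) as [S [HS1 HS2]].
  { exists Mb. intros y [c [d [Hcd ->]]]. apply HMb, Hcd. }
  { exists (I 0 0), 0, 0. split; [lra | reflexivity]. }
  assert (Hex : exists c0 d0, c0 <= d0 /\ S - eps < I c0 d0).
  { apply NNPP. intro N. assert (S <= S - eps); [|lra]. apply HS2.
    intros y [c [d [Hcd ->]]]. apply Rnot_lt_le. intro. apply N. eauto. }
  destruct Hex as [c0 [d0 [Hcd0 Hy0]]].
  exists (Rabs c0 + Rabs d0 + 1).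
  pose proof (Rle_abs c0); pose proof (Rle_abs d0);
  pose proof (Rle_abs (-c0)); pose proof (Rle_abs (-d0)); rewrite !Rabs_Ropp in *.
  split; [lra|]. intros c d Hcd [Hc | Hd].
  - assert (I c0 d0 + I d0 c + I c d <= S).
    { rewrite !Iadd. apply HS1. exists c0, d. split; [lra | reflexivity]. }
    pose proof (Ipos d0 c ltac:(lra)). fold (I c d). lra.
  - assert (I c d + I d c0 + I c0 d0 <= S).
    { rewrite !Iadd. apply HS1. exists c, d0. split; [lra | reflexivity]. }
    pose proof (Ipos d c0 ltac:(lra)). fold (I c d). lra.
Qed.

Lemma sign_persists (G : R -> R) eps x y : continuity G -> 0 < eps -> x <= y ->
  (forall z, x <= z <= y -> eps <= Rabs (G z)) -> (eps <= G x <-> eps <= G y).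
Proof.
  intros Hc He Hxy Hbig.
  assert (Hsplit : forall z, x <= z <= y -> eps <= G z \/ G z <= - eps).
  { intros z Hz. specialize (Hbig z Hz). unfold Rabs in Hbig.
    destruct (Rcase_abs (G z)); lra. }
  assert (Hnz : forall z, x <= z <= y -> G z <> 0).
  { intros z Hz E. destruct (Hsplit z Hz); lra. }
  split; intro A; apply Rnot_lt_le; intro B.
  - destruct (Hsplit y ltac:(lra)); [lra|].
    destruct (IVT_cor G x y Hc Hxy) as [z [Hz Ez]]; [nra | exact (Hnz z Hz Ez)].
  - destruct (Hsplit x ltac:(lra)); [lra|].
    destruct (IVT_cor G x y Hc Hxy) as [z [Hz Ez]]; [nra | exact (Hnz z Hz Ez)].
Qed.

Section Density.
Variables phi dphi : R -> R.
Hypothesis Hd : forall x, is_derive phi x (dphi x).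
Hypothesis Hc : continuity dphi.
Hypothesis Hp : forall x, 0 < phi x.
Hypothesis Hi : integral_R phi 1.

Lemma density_increment p q : p <= q ->
  exists c, p <= c <= q /\ phi q - phi p = dphi c * (q - p).
Proof.
  intro Hpq. destruct (MVT_gen phi p q dphi) as [c [Hc1 Hc2]].
  - intros; apply Hd.
  - intros x _. apply ex_derive_continuity_pt. eexists; apply Hd.
  - rewrite Rmin_left, Rmax_right in Hc1 by lra. eauto.
Qed.

Lemma density_not_bounded_below k N : 0 < k ->
  ~ (forall x, N <= x -> k <= phi x) /\ ~ (forall x, x <= N -> k <= phi x).
Proof.
  intros Hk.
  assert (Hex : forall a b, ex_RInt phi a b).
  { intros. apply ex_RInt_continuity. intros x _.
    apply ex_derive_continuity_pt. eexists; apply Hd. }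
  assert (Hpos : forall a b, a <= b -> 0 <= RInt phi a b).
  { intros a b Hab. apply RInt_ge_0; auto. intros; left; apply Hp. }
  assert (Hlow : forall a b, a <= b -> (forall x, a <= x <= b -> k <= phi x) ->
            k * (b - a) <= RInt phi a b).
  { intros a b Hab Hab'.
    replace (k * (b - a)) with (RInt (fun _ => k) a b)
      by (rewrite RInt_const; unfold scal; simpl; unfold mult; simpl; ring).
    apply RInt_le; auto; [apply ex_RInt_const|]. intros; apply Hab'; lra. }
  destruct (Hi 1 Rlt_0_1) as [M HM].
  set (L := Rabs M + Rabs N + 2 / k + 1).
  pose proof (Rle_abs M); pose proof (Rle_abs N); pose proof (Rle_abs (-M)); pose proof (Rle_abs (-N));
  rewrite !Rabs_Ropp in *.
  assert (H2k : 0 < 2 / k) by (apply Rdiv_lt_0_compat; lra).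
  assert (Hk2 : k * (2 / k) = 2) by (field; lra).
  (* the integral over [-L, L] is less than 2 ... *)
  assert (Hsmall : RInt phi (- L) N + RInt phi N L < 2).
  { pose proof (ex_RInt_Reals_0 _ _ _ (Hex (- L) L)) as pr.
    specialize (HM (- L) L pr ltac:(unfold L; lra) ltac:(unfold L; lra)).
    rewrite <- RInt_Reals, <- (RInt_Chasles_R phi (- L) N L) in HM by apply Hex.
    apply Rabs_def2 in HM. lra. }
  (* ... but a lower bound k on either side of N makes it at least 2. *)
  split; intro Hbig.
  - pose proof (Hlow N L ltac:(unfold L; lra) ltac:(intros; apply Hbig; lra)).
    pose proof (Hpos (- L) N ltac:(unfold L; lra)).
    assert (L - N >= 2 / k) by (unfold L; lra). nra.
  - pose proof (Hlow (- L) N ltac:(unfold L; lra) ltac:(intros; apply Hbig; lra)).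
    pose proof (Hpos N L ltac:(unfold L; lra)).
    assert (N - - L >= 2 / k) by (unfold L; lra). nra.
Qed.

Lemma density_deriv_small_right eps N : 0 < eps -> exists x, N <= x /\ Rabs (dphi x) < eps.
Proof.
  intros He. apply NNPP. intro Hn.
  assert (Hbig : forall x, N <= x -> eps <= Rabs (dphi x)).
  { intros x Hx. apply Rnot_lt_le. intro. apply Hn. eauto. }
  assert (Hsign : forall x, N <= x -> (eps <= dphi x <-> eps <= dphi N)).
  { intros x Hx. symmetry. apply sign_persists; auto. intros; apply Hbig; lra. }
  destruct (Rle_lt_dec eps (dphi N)) as [Hup | Hdown].
  - (* phi increases at rate eps, so it exceeds eps beyond N + 1 *)
    apply (proj1 (density_not_bounded_below eps (N + 1) He)). intros x Hx.
    destruct (density_increment N x ltac:(lra)) as [c [Hc' Ec]].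
    assert (eps <= dphi c) by (apply Hsign; [lra | exact Hup]).
    assert (0 <= (dphi c - eps) * (x - N)) by (apply Rmult_le_pos; lra).
    assert (0 <= eps * (x - N - 1)) by (apply Rmult_le_pos; lra).
    pose proof (Hp N). nra.
  - (* phi decreases at rate eps, so it becomes negative *)
    assert (Hneg : forall x, N <= x -> dphi x <= - eps).
    { intros x Hx. specialize (Hbig x Hx). unfold Rabs in Hbig.
      destruct (Rcase_abs (dphi x)); [lra|].
      assert (eps <= dphi N) by (apply (Hsign x Hx); lra). lra. }
    set (x := N + phi N / eps + 1).
    assert (Hq : eps * (phi N / eps) = phi N) by (field; lra).
    assert (0 < phi N / eps) by (apply Rdiv_lt_0_compat; auto).
    destruct (density_increment N x ltac:(unfold x; lra)) as [c [Hc' Ec]].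
    pose proof (Hneg c ltac:(lra)). pose proof (Hp x).
    replace (x - N) with (phi N / eps + 1) in Ec by (unfold x; ring). nra.
Qed.

Lemma density_deriv_small_left eps N : 0 < eps -> exists x, x <= N /\ Rabs (dphi x) < eps.
Proof.
  intros He. apply NNPP. intro Hn.
  assert (Hbig : forall x, x <= N -> eps <= Rabs (dphi x)).
  { intros x Hx. apply Rnot_lt_le. intro. apply Hn. eauto. }
  assert (Hsign : forall x, x <= N -> (eps <= dphi x <-> eps <= dphi N)).
  { intros x Hx. apply sign_persists; auto. intros; apply Hbig; lra. }
  destruct (Rle_lt_dec eps (dphi N)) as [Hup | Hdown].
  - (* going left, phi decreases at rate eps, so it becomes negative *)
    set (x := N - phi N / eps - 1).
    assert (Hq : eps * (phi N / eps) = phi N) by (field; lra).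
    assert (0 < phi N / eps) by (apply Rdiv_lt_0_compat; auto).
    destruct (density_increment x N ltac:(unfold x; lra)) as [c [Hc' Ec]].
    assert (eps <= dphi c) by (apply Hsign; [lra | exact Hup]). pose proof (Hp x).
    replace (N - x) with (phi N / eps + 1) in Ec by (unfold x; ring). nra.
  - (* going left, phi increases at rate eps, so it exceeds eps before N - 1 *)
    assert (Hneg : forall x, x <= N -> dphi x <= - eps).
    { intros x Hx. specialize (Hbig x Hx). unfold Rabs in Hbig.
      destruct (Rcase_abs (dphi x)); [lra|].
      assert (eps <= dphi N) by (apply (Hsign x Hx); lra). lra. }
    apply (proj2 (density_not_bounded_below eps (N - 1) He)). intros x Hx.
    destruct (density_increment x N ltac:(lra)) as [c [Hc' Ec]].
    pose proof (Hneg c ltac:(lra)).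
    assert (0 <= (- eps - dphi c) * (N - x)) by (apply Rmult_le_pos; lra).
    assert (0 <= eps * (N - 1 - x)) by (apply Rmult_le_pos; lra).
    pose proof (Hp N). nra.
Qed.
End Density.

Lemma continuous_within_sub (A : R -> R) (P P' : R -> Prop) x :
  (forall y, P' y -> P y) -> continuous_within A P x -> continuous_within A P' x.
Proof.
  intros HPP' HA eps He. destruct (HA eps He) as [d [Hd Hd']].
  exists d. split; auto.
Qed.

(* If the slope D of A decreases up to an error e, the chord of A lies below
   the graph up to l (1 - l) (t - s) e: apply the mean value theorem on both
   sides of the intermediate point m. *)
Lemma almost_concave (A D : R -> R) s t l e : s < t -> 0 < l < 1 ->
  (forall x, s < x < t -> is_derive A x (D x)) ->
  (forall x, s <= x <= t -> continuous_within A (fun y => s <= y <= t) x) ->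
  (forall x1 x2, s < x1 -> x1 <= x2 -> x2 < t -> D x2 <= D x1 + e) ->
  l * A s + (1 - l) * A t <= A (l * s + (1 - l) * t) + l * (1 - l) * (t - s) * e.
Proof.
  intros Hst Hl Hder Hcont Hslope.
  set (m := l * s + (1 - l) * t).
  assert (Hsm : s < m) by (unfold m; nra). assert (Hmt : m < t) by (unfold m; nra).
  destruct (mvt_interior A D s m Hsm) as [x1 [Hx1 E1]].
  { intros; apply Hder; lra. }
  { intros x Hx. apply (continuous_within_sub A (fun y => s <= y <= t)); [intros; lra|].
    apply Hcont; lra. }
  destruct (mvt_interior A D m t Hmt) as [x2 [Hx2 E2]].
  { intros; apply Hder; lra. }
  { intros x Hx. apply (continuous_within_sub A (fun y => s <= y <= t)); [intros; lra|].
    apply Hcont; lra. }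
  pose proof (Hslope x1 x2 ltac:(lra) ltac:(lra) ltac:(lra)) as Hx12.
  replace (m - s) with ((1 - l) * (t - s)) in E1 by (unfold m; ring).
  replace (t - m) with (l * (t - s)) in E2 by (unfold m; ring).
  assert (0 <= l * (1 - l) * (t - s)) by (apply Rmult_le_pos; nra).
  nra.
Qed.

Lemma concave_on_01_of_ordered (H : R -> R) :
  (forall s t l, 0 <= s -> s < t -> t <= 1 -> 0 < l < 1 ->
     l * H s + (1 - l) * H t <= H (l * s + (1 - l) * t)) ->
  concave_on_01 H.
Proof.
  intros Hord s t l Hs Ht Hl.
  destruct (Req_dec l 0) as [-> | Hl0].
  { replace (0 * s + (1 - 0) * t) with t by ring. lra. }
  destruct (Req_dec l 1) as [-> | Hl1].
  { replace (1 * s + (1 - 1) * t) with s by ring. lra. }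
  destruct (Rtotal_order s t) as [Hst | [-> | Hts]].
  - apply Hord; lra.
  - replace (l * t + (1 - l) * t) with t by ring. lra.
  - pose proof (Hord t s (1 - l) ltac:(lra) Hts ltac:(lra) ltac:(lra)) as C.
    replace (1 - (1 - l)) with l in C by ring.
    replace (l * s + (1 - l) * t) with ((1 - l) * t + l * s) by ring. lra.
Qed.

Section Entropy.
Variables (f : R -> R -> R) (v : R) (alpha : R -> R).
Hypothesis Hsmooth : smooth2 f.
Hypothesis Hpos : forall t x, 0 <= t <= 1 -> 0 < f t x.
Hypothesis Halpha_C1 : C1_on_R alpha.
Hypothesis Halpha_mono : forall s t, 0 <= s <= 1 -> 0 <= t <= 1 -> s <= t -> alpha s <= alpha t.

Definition g t x := v * f t x + alpha t * px f t x.
Definition h t x := v ^ 2 * f t x + 2 * v * alpha t * px f t x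
                    + alpha t ^ 2 * px (px f) t x - deriv alpha t * f t x.

Hypothesis HPDE : forall t x, 0 <= t <= 1 -> pt f t x = - px g t x.

Local Hint Resolve smooth2_px smooth2_pt : smooth.

Lemma alpha_is_derive t : is_derive alpha t (deriv alpha t).
Proof. apply is_derive_Reals, Halpha_C1. Qed.

Lemma alpha_ex_derive t : ex_derive alpha t.
Proof. eexists; apply alpha_is_derive. Qed.

Lemma alpha_Derive t : Derive alpha t = deriv alpha t.
Proof. apply is_derive_unique, alpha_is_derive. Qed.

Lemma dalpha_nonneg u : 0 < u < 1 -> 0 <= deriv alpha u.
Proof.
  intro Hu. apply (derivative_nonneg_of_nondecreasing alpha 0 1 u); auto.
  apply Halpha_C1.
Qed.

Ltac partials_exist := repeat match goal with
  | |- _ /\ _ => split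
  | |- True => exact I
  | |- ex_derive (fun y => ?F ?t y) _ => apply (smooth2_ex_x F); auto with smooth
  | |- ex_derive (fun s => ?F s ?x) _ => apply (smooth2_ex_t F); auto with smooth
  | |- ex_derive alpha _ => apply alpha_ex_derive
  | |- ex_derive (fun s => alpha s) _ => apply alpha_ex_derive
  end.

Ltac rewrite_partials := repeat first
  [ rewrite smooth2_Derive_x by auto with smooth
  | rewrite smooth2_Derive_t by auto with smooth
  | rewrite alpha_Derive ].

Lemma px_g t x : px g t x = v * px f t x + alpha t * px (px f) t x.
Proof.
  apply deriv_unique, is_derive_Reals. unfold g. auto_derive; partials_exist.
  rewrite_partials. ring.
Qed.

Lemma px_h t x : px h t x = v ^ 2 * px f t x + 2 * v * alpha t * px (px f) t x
                      + alpha t ^ 2 * px (px (px f)) t x - deriv alpha t * px f t x.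
Proof.
  apply deriv_unique, is_derive_Reals. unfold h. auto_derive; partials_exist.
  rewrite_partials. ring.
Qed.

Lemma px_px_h t x : px (px h) t x = v ^ 2 * px (px f) t x + 2 * v * alpha t * px (px (px f)) t x
                      + alpha t ^ 2 * px (px (px (px f))) t x - deriv alpha t * px (px f) t x.
Proof.
  unfold px at 1. rewrite (functional_extensionality _ _ (px_h t)).
  apply deriv_unique, is_derive_Reals. auto_derive; partials_exist.
  rewrite_partials. ring.
Qed.

Lemma pde_px (F : R -> R -> R) : smooth2 F ->
  (forall t x, 0 <= t <= 1 -> pt F t x = - (v * px F t x + alpha t * px (px F) t x)) ->
  forall t x, 0 <= t <= 1 -> pt (px F) t x = - (v * px (px F) t x + alpha t * px (px (px F)) t x).
Proof.
  intros HF HpdeF t x Ht. rewrite smooth2_schwarz by exact HF. unfold px at 1.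
  rewrite (functional_extensionality (fun y => pt F t y) _ (fun y => HpdeF t y Ht)).
  apply deriv_unique, is_derive_Reals. auto_derive; partials_exist. rewrite_partials. ring.
Qed.

Lemma pt_f t x : 0 <= t <= 1 -> pt f t x = - (v * px f t x + alpha t * px (px f) t x).
Proof. intro Ht. rewrite HPDE, px_g; auto. Qed.

Lemma pt_px_f t x : 0 <= t <= 1 ->
  pt (px f) t x = - (v * px (px f) t x + alpha t * px (px (px f)) t x).
Proof. apply pde_px; [exact Hsmooth | exact pt_f]. Qed.

Lemma pt_px_px_f t x : 0 <= t <= 1 ->
  pt (px (px f)) t x = - (v * px (px (px f)) t x + alpha t * px (px (px (px f))) t x).
Proof. apply pde_px; [auto with smooth | exact pt_px_f]. Qed.

(* Coquelicot states equalities of integrands in a normed-module type; view them in R. *)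
Ltac real_eq := match goal with |- ?A = ?B => change (A = B :> R) end.

Lemma interior_nbhd u : 0 < u < 1 ->
  exists e, 0 < e /\ forall t, Rabs (t - u) < e -> 0 < t < 1.
Proof.
  intro Hu. exists (Rmin u (1 - u)). split; [apply Rmin_glb_lt; lra|].
  intros t Ht. pose proof (Rmin_l u (1 - u)); pose proof (Rmin_r u (1 - u)).
  apply Rabs_def2 in Ht. lra.
Qed.

Ltac continuity_2d := unfold Rdiv; repeat match goal with
  | |- continuity_2d_pt (fun _ _ => _) _ _ => apply continuity_2d_pt_const
  | |- continuity_2d_pt (fun u v => _ + _) _ _ => apply continuity_2d_pt_plus
  | |- continuity_2d_pt (fun u v => _ - _) _ _ => apply continuity_2d_pt_minus
  | |- continuity_2d_pt (fun u v => _ * _) _ _ => apply continuity_2d_pt_mult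
  | |- continuity_2d_pt (fun u v => - _) _ _ => apply continuity_2d_pt_opp
  | |- continuity_2d_pt (fun u v => / f u v) _ _ =>
      apply (continuity_2d_pt_inv (fun u v => f u v)); [| apply Rgt_not_eq, Hpos; lra]
  | |- continuity_2d_pt (fun u v => ln (f u v)) _ _ =>
      apply (continuity_1d_2d_pt_comp ln (fun u v => f u v));
      [apply derivable_continuous_pt; eexists; apply derivable_pt_lim_ln, Hpos; lra|]
  | |- continuity_2d_pt (fun u v => alpha u) _ _ =>
      apply (continuity_1d_2d_pt_comp alpha (fun u _ => u));
      [apply ex_derive_continuity_pt, alpha_ex_derive | apply continuity_2d_pt_id1]
  | |- continuity_2d_pt (fun u v => deriv alpha u) _ _ =>
      apply (continuity_1d_2d_pt_comp (deriv alpha) (fun u _ => u));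
      [apply Halpha_C1 | apply continuity_2d_pt_id1]
  | |- continuity_2d_pt _ _ _ => solve [apply smooth2_continuity_2d; auto with smooth]
  end.

Definition entropy_density t x := - (f t x * ln (f t x)).
Definition rho t x := px g t x * (1 + ln (f t x)).
Definition kappa t x := px g t x * ln (f t x).
Definition psi t x := - (px (px h) t x * ln (f t x) + (px g t x) ^ 2 * / f t x).

Lemma entropy_deriv a b u : 0 < u < 1 ->
  is_derive (fun t => RInt (entropy_density t) a b) u (RInt (rho u) a b).
Proof.
  intro Hu. destruct (interior_nbhd u Hu) as [e [He Hnear]].
  set (D := fun t y => - (pt f t y * (1 + ln (f t y)))).
  replace (RInt (rho u) a b) with (RInt (D u) a b).
  2:{ apply RInt_ext. intros x _. real_eq. unfold D, rho. rewrite HPDE by lra. ring. }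
  apply (is_derive_RInt_param_R _ D a b u e He).
  - intros t y Ht. specialize (Hnear t Ht). pose proof (Hpos t y ltac:(lra)).
    unfold entropy_density, D. auto_derive; partials_exist; [lra|].
    rewrite_partials. field. lra.
  - intro x. unfold D. continuity_2d.
  - intros t y Ht. specialize (Hnear t Ht). pose proof (Hpos t y ltac:(lra)).
    apply ex_derive_continuity_pt. unfold entropy_density.
    auto_derive; partials_exist. lra.
Qed.

Lemma kappa_deriv a b u : 0 < u < 1 ->
  is_derive (fun t => RInt (kappa t) a b) u (RInt (psi u) a b).
Proof.
  intro Hu. destruct (interior_nbhd u Hu) as [e [He Hnear]].
  set (D := fun t y =>
    (v * pt (px f) t y + deriv alpha t * px (px f) t y + alpha t * pt (px (px f)) t y) * ln (f t y)
    + (v * px f t y + alpha t * px (px f) t y) * (pt f t y / f t y)).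
  replace (RInt (psi u) a b) with (RInt (D u) a b).
  2:{ apply RInt_ext. intros x _. real_eq. pose proof (Hpos u x ltac:(lra)).
      unfold D, psi. rewrite px_px_h, px_g, pt_f, pt_px_f, pt_px_px_f by lra. field. lra. }
  apply (is_derive_RInt_param_R _ D a b u e He).
  - intros t y Ht. specialize (Hnear t Ht). pose proof (Hpos t y ltac:(lra)).
    apply (is_derive_ext (fun z => (v * px f z y + alpha z * px (px f) z y) * ln (f z y))).
    { intro z. unfold kappa. rewrite px_g. reflexivity. }
    unfold D. auto_derive; partials_exist; [lra|].
    rewrite_partials. field. lra.
  - intro x. unfold D. continuity_2d.
  - intros t y Ht. specialize (Hnear t Ht). pose proof (Hpos t y ltac:(lra)).
    apply ex_derive_continuity_pt.
    apply (ex_derive_ext (fun z => (v * px f t z + alpha t * px (px f) t z) * ln (f t z))).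
    { intro z. unfold kappa. rewrite px_g. reflexivity. }
    auto_derive; partials_exist. lra.
Qed.

Lemma entropy_density_continuous t x : 0 <= t <= 1 -> continuity_pt (entropy_density t) x.
Proof.
  intro Ht. pose proof (Hpos t x Ht). apply ex_derive_continuity_pt.
  unfold entropy_density. auto_derive; partials_exist. lra.
Qed.

Lemma px_g_continuous t x : continuity_pt (px g t) x.
Proof.
  apply ex_derive_continuity_pt.
  apply (ex_derive_ext (fun y => v * px f t y + alpha t * px (px f) t y)).
  { intro y. rewrite px_g. reflexivity. }
  auto_derive; partials_exist.
Qed.

Lemma rho_continuous t x : 0 <= t <= 1 -> continuity_pt (rho t) x.
Proof.
  intro Ht. pose proof (Hpos t x Ht). apply ex_derive_continuity_pt.
  apply (ex_derive_ext (fun y => (v * px f t y + alpha t * px (px f) t y) * (1 + ln (f t y)))).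
  { intro y. unfold rho. rewrite px_g. reflexivity. }
  auto_derive; partials_exist. lra.
Qed.

Lemma kappa_continuous t x : 0 <= t <= 1 -> continuity_pt (kappa t) x.
Proof.
  intro Ht. pose proof (Hpos t x Ht). apply ex_derive_continuity_pt.
  apply (ex_derive_ext (fun y => (v * px f t y + alpha t * px (px f) t y) * ln (f t y))).
  { intro y. unfold kappa. rewrite px_g. reflexivity. }
  auto_derive; partials_exist. lra.
Qed.

Lemma psi_continuous t x : 0 <= t <= 1 -> continuity_pt (psi t) x.
Proof.
  intro Ht. pose proof (Hpos t x Ht). apply ex_derive_continuity_pt.
  apply (ex_derive_ext (fun y =>
    - ((v ^ 2 * px (px f) t y + 2 * v * alpha t * px (px (px f)) t y
        + alpha t ^ 2 * px (px (px (px f))) t y - deriv alpha t * px (px f) t y) * ln (f t y)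
       + (v * px f t y + alpha t * px (px f) t y) ^ 2 * / f t y))).
  { intro y. unfold psi. rewrite px_px_h, px_g. reflexivity. }
  auto_derive; partials_exist; lra.
Qed.

(* Integration by parts: rho = px g + kappa, so ∫_a^b rho = [g]_a^b + ∫_a^b kappa. *)
Lemma rho_integral t a b : 0 <= t <= 1 ->
  RInt (rho t) a b = g t b - g t a + RInt (kappa t) a b.
Proof.
  intro Ht.
  assert (Hg : forall x, is_derive (g t) x (px g t x)).
  { intro x. rewrite px_g. unfold g. auto_derive; partials_exist. rewrite_partials. ring. }
  rewrite <- (RInt_derive (g t) (px g t) a b) by (intros; auto using px_g_continuous).
  rewrite <- (@RInt_plus R_CompleteNormedModule).
  - apply RInt_ext. intros x _. unfold rho, kappa, plus; simpl. ring.
  - apply ex_RInt_continuity. intros; apply px_g_continuous.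
  - apply ex_RInt_continuity. intros; apply kappa_continuous, Ht.
Qed.

(* The boundary function Q, whose x-derivative exceeds psi by the nonnegative
   amount [Q_excess]. *)
Definition Q t x := - (px h t x * ln (f t x)) + h t x / f t x * px f t x
                    - (g t x / f t x) ^ 2 * px f t x + deriv alpha t * px f t x.

Definition Q_excess t x :=
  2 * alpha t ^ 2 * f t x * (px (px f) t x / f t x - (px f t x / f t x) ^ 2) ^ 2
  + deriv alpha t * (px f t x ^ 2 / f t x).

Lemma Q_deriv t x : 0 <= t <= 1 -> is_derive (Q t) x (psi t x + Q_excess t x).
Proof.
  intro Ht. pose proof (Hpos t x Ht).
  apply (is_derive_ext (fun y =>
    - ((v ^ 2 * px f t y + 2 * v * alpha t * px (px f) t y
        + alpha t ^ 2 * px (px (px f)) t y - deriv alpha t * px f t y) * ln (f t y))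
    + h t y / f t y * px f t y - (g t y / f t y) ^ 2 * px f t y + deriv alpha t * px f t y)).
  { intro y. unfold Q. rewrite px_h. reflexivity. }
  unfold psi, Q_excess, h, g. rewrite px_px_h, px_g.
  auto_derive; partials_exist; try lra.
  rewrite_partials. field. lra.
Qed.

Lemma Q_excess_nonneg t x : 0 < t < 1 -> 0 <= Q_excess t x.
Proof.
  intro Ht. pose proof (Hpos t x ltac:(lra)). pose proof (dalpha_nonneg t Ht). unfold Q_excess.
  apply Rplus_le_le_0_compat.
  - apply Rmult_le_pos; [|apply pow2_ge_0]. apply Rmult_le_pos; [nra | lra].
  - apply Rmult_le_pos; [lra|]. apply Rdiv_le_0_compat; [apply pow2_ge_0 | lra].
Qed.

Lemma Q_excess_continuous t x : 0 <= t <= 1 -> continuity_pt (Q_excess t) x.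
Proof.
  intro Ht. pose proof (Hpos t x Ht). apply ex_derive_continuity_pt.
  unfold Q_excess. auto_derive; partials_exist; lra.
Qed.

Lemma psi_integral_le_Q t a b : 0 < t < 1 -> a <= b -> RInt (psi t) a b <= Q t b - Q t a.
Proof.
  intros Ht Hab.
  assert (Hcont : forall x, continuity_pt (fun y => psi t y + Q_excess t y) x).
  { intro x. apply continuity_pt_plus; [apply psi_continuous | apply Q_excess_continuous]; lra. }
  rewrite <- (RInt_derive (Q t) (fun y => psi t y + Q_excess t y) a b)
    by (intros; first [apply Q_deriv; lra | apply Hcont]).
  apply RInt_le; auto.
  - apply ex_RInt_continuity. intros; apply psi_continuous; lra.
  - apply ex_RInt_continuity. intros; apply Hcont.
  - intros x _. pose proof (Q_excess_nonneg t x Ht). lra.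
Qed.

Hypothesis Hprob : forall t, 0 <= t <= 1 -> integral_R (f t) 1.

(* Each f_t is a density, so px f_t is small at points arbitrarily far out. *)
Lemma px_f_small_far u eps N : 0 <= u <= 1 -> 0 < eps ->
  (exists x, N <= x /\ Rabs (px f u x) < eps) /\ (exists x, x <= N /\ Rabs (px f u x) < eps).
Proof.
  intros Hu He.
  assert (Hd : forall x, is_derive (f u) x (px f u x)) by (intro; apply smooth2_is_derive_x, Hsmooth).
  assert (Hc : continuity (px f u)).
  { intro x. apply ex_derive_continuity_pt, (smooth2_ex_x (px f)); auto with smooth. }
  assert (Hp : forall x, 0 < f u x) by (intro; apply Hpos, Hu).
  split; [apply (density_deriv_small_right (f u)) | apply (density_deriv_small_left (f u))]; auto.
Qed.

Variables thetaA thetaB : R -> R.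
Hypothesis HthetaA : integrable_R thetaA.
Hypothesis HthetaB : integrable_R thetaB.
Hypothesis Hdominated : forall t x, 0 <= t <= 1 ->
  Rabs (px g t x * (1 + ln (f t x))) <= thetaA x /\
  Rabs (px (px h) t x * ln (f t x) + (px g t x) ^ 2 * / f t x) <= thetaB x.
Hypothesis Hvanish : forall t, 0 <= t <= 1 ->
  vanishes_at_infty (g t) /\
  vanishes_at_infty (fun x => px h t x * ln (f t x)) /\
  vanishes_at_infty (fun x => h t x / f t x * px f t x) /\
  vanishes_at_infty (fun x => (g t x / f t x) ^ 2 * px f t x).

Lemma Q_small_far u eps : 0 <= u <= 1 -> 0 < eps -> exists M delta, 0 < delta /\
  forall x, M <= Rabs x -> Rabs (px f u x) < delta -> Rabs (Q u x) < eps.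
Proof.
  intros Hu He. destruct (Hvanish u Hu) as [_ [V1 [V2 V3]]].
  destruct (V1 (eps / 4) ltac:(lra)) as [M1 B1].
  destruct (V2 (eps / 4) ltac:(lra)) as [M2 B2].
  destruct (V3 (eps / 4) ltac:(lra)) as [M3 B3].
  set (c := Rabs (deriv alpha u) + 1).
  assert (Hc : 0 < c) by (unfold c; pose proof (Rabs_pos (deriv alpha u)); lra).
  exists (Rmax M1 (Rmax M2 M3)), (eps / 4 / c). split; [apply Rdiv_lt_0_compat; lra|].
  intros x Hx Hsmall.
  pose proof (Rmax_l M1 (Rmax M2 M3)); pose proof (Rmax_r M1 (Rmax M2 M3));
  pose proof (Rmax_l M2 M3); pose proof (Rmax_r M2 M3).
  specialize (B1 x ltac:(lra)). specialize (B2 x ltac:(lra)). specialize (B3 x ltac:(lra)).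
  assert (B4 : Rabs (deriv alpha u * px f u x) <= eps / 4).
  { rewrite Rabs_mult.
    apply Rle_trans with (c * (eps / 4 / c)); [|right; field; lra].
    apply Rmult_le_compat; [apply Rabs_pos | apply Rabs_pos | unfold c; lra | lra]. }
  unfold Q.
  repeat match goal with
         | H : Rabs ?y < _ |- _ => apply Rabs_def2 in H
         | H : Rabs ?y <= _ |- _ => apply Rabs_le_between in H
         end.
  apply Rabs_def1; lra.
Qed.

(* Uniformly in u, ∫_a^b psi_u <= eps once [a, b] is large: up to tails
   controlled by thetaB, the integral is bounded by an increment of Q between
   far points where px f_u, hence Q_u, is small. *)
Lemma psi_integral_small eps : 0 < eps -> exists M, 0 <= M /\
  forall a b, a <= - M -> M <= b -> forall u, 0 < u < 1 -> RInt (psi u) a b <= eps.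
Proof.
  intros He. destruct (integrable_tail thetaB HthetaB (eps / 4) ltac:(lra)) as [M [HM0 HM]].
  exists M. split; [exact HM0|]. intros a b Ha Hb u Hu.
  destruct (Q_small_far u (eps / 4) ltac:(lra) ltac:(lra)) as [MQ [delta [Hdelta HMQ]]].
  set (N := Rabs MQ + Rabs a + Rabs b + 1).
  pose proof (Rle_abs MQ); pose proof (Rle_abs (- a)); pose proof (Rle_abs b); rewrite Rabs_Ropp in *.
  pose proof (Rabs_pos MQ); pose proof (Rabs_pos a); pose proof (Rabs_pos b).
  destruct (px_f_small_far u delta N ltac:(lra) Hdelta) as [[b2 [Hb2 Sb2]] _].
  destruct (px_f_small_far u delta (- N) ltac:(lra) Hdelta) as [_ [a2 [Ha2 Sa2]]].
  assert (Qb : Rabs (Q u b2) < eps / 4).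
  { apply HMQ; [|exact Sb2]. pose proof (Rle_abs b2). unfold N in Hb2. lra. }
  assert (Qa : Rabs (Q u a2) < eps / 4).
  { apply HMQ; [|exact Sa2]. pose proof (Rle_abs (- a2)). rewrite Rabs_Ropp in *. unfold N in Ha2. lra. }
  assert (Hex : forall c d, ex_RInt (psi u) c d)
    by (intros; apply ex_RInt_continuity; intros; apply psi_continuous; lra).
  assert (Htail : forall c d, c <= d -> (M <= c \/ d <= - M) -> Rabs (RInt (psi u) c d) <= eps / 4).
  { intros c d Hcd Hfar. eapply Rle_trans; [|apply (HM c d Hcd Hfar)].
    apply RInt_abs_le_integrable; auto.
    intros x _. unfold psi. rewrite Rabs_Ropp. apply Hdominated; lra. }
  pose proof (psi_integral_le_Q u a2 b2 Hu ltac:(unfold N in *; lra)) as Hle.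
  rewrite <- (RInt_Chasles_R _ a2 a b2), <- (RInt_Chasles_R _ a b b2) in Hle by auto.
  pose proof (Htail a2 a ltac:(unfold N in *; lra) ltac:(right; lra)) as T1.
  pose proof (Htail b b2 ltac:(unfold N in *; lra) ltac:(left; lra)) as T2.
  apply Rabs_le_between in T1; apply Rabs_le_between in T2.
  apply Rabs_def2 in Qa; apply Rabs_def2 in Qb. lra.
Qed.

Lemma kappa_integral_almost_nonincreasing eps : 0 < eps -> exists M, 0 <= M /\
  forall a b, a <= - M -> M <= b -> forall x1 x2, 0 < x1 -> x1 <= x2 -> x2 < 1 ->
  RInt (kappa x2) a b <= RInt (kappa x1) a b + eps.
Proof.
  intros He. destruct (psi_integral_small eps He) as [M [HM0 HM]].
  exists M. split; [exact HM0|]. intros a b Ha Hb x1 x2 H1 H12 H2.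
  destruct (MVT_gen (fun t => RInt (kappa t) a b) x1 x2 (fun t => RInt (psi t) a b))
    as [c [Hc Hcv]].
  - intros t Ht. rewrite Rmin_left, Rmax_right in Ht by lra. apply kappa_deriv. lra.
  - intros t Ht. rewrite Rmin_left, Rmax_right in Ht by lra.
    apply ex_derive_continuity_pt. eexists. apply kappa_deriv. lra.
  - rewrite Rmin_left, Rmax_right in Hc by lra. simpl in Hcv.
    assert (RInt (psi c) a b <= eps) by (apply HM; auto; lra).
    destruct (Rle_lt_dec 0 (RInt (psi c) a b)); nra.
Qed.

Lemma rho_integral_tails eps : 0 < eps -> exists M, 0 <= M /\
  forall t c d, 0 <= t <= 1 -> c <= d -> (M <= c \/ d <= - M) -> Rabs (RInt (rho t) c d) <= eps.
Proof.
  intros He. destruct (integrable_tail thetaA HthetaA eps He) as [M [HM0 HM]].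
  exists M. split; [exact HM0|]. intros t c d Ht Hcd Hfar.
  eapply Rle_trans; [|apply (HM c d Hcd Hfar)].
  apply RInt_abs_le_integrable; auto.
  - apply ex_RInt_continuity. intros; apply rho_continuous, Ht.
  - intros x _. apply Hdominated, Ht.
Qed.

(* The slope ∫_a^b rho_t of the truncated entropy is almost nonincreasing in t,
   uniformly for large [a, b]: extend to a symmetric [-N, N] on which the
   boundary values of g are small, and use rho_integral. *)
Lemma slope_almost_nonincreasing eps : 0 < eps -> exists M, 0 <= M /\
  forall a b, a <= - M -> M <= b -> forall x1 x2, 0 < x1 -> x1 <= x2 -> x2 < 1 ->
  RInt (rho x2) a b <= RInt (rho x1) a b + eps.
Proof.
  intros He. destruct (rho_integral_tails (eps / 8) ltac:(lra)) as [MA [HMA0 HMA]].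
  destruct (kappa_integral_almost_nonincreasing (eps / 4) ltac:(lra)) as [MK [HMK0 HMK]].
  exists (Rmax MA MK). pose proof (Rmax_l MA MK); pose proof (Rmax_r MA MK).
  split; [lra|]. intros a b Ha Hb x1 x2 H1 H12 H2.
  destruct (proj1 (Hvanish x1 ltac:(lra)) (eps / 16) ltac:(lra)) as [M1 G1].
  destruct (proj1 (Hvanish x2 ltac:(lra)) (eps / 16) ltac:(lra)) as [M2 G2].
  set (N := Rabs M1 + Rabs M2 + Rabs a + Rabs b + 1).
  pose proof (Rle_abs M1); pose proof (Rle_abs M2); pose proof (Rle_abs (- a)); pose proof (Rle_abs b).
  rewrite Rabs_Ropp in *.
  pose proof (Rabs_pos M1); pose proof (Rabs_pos M2); pose proof (Rabs_pos a); pose proof (Rabs_pos b).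
  assert (HN : Rabs N = N /\ Rabs (- N) = N).
  { rewrite Rabs_Ropp. split; apply Rabs_pos_eq; unfold N; lra. }
  (* ∫_a^b rho_x = [g_x]_{-N}^N + ∫_{-N}^N kappa_x - (two tails) *)
  assert (Hdecomp : forall x, 0 < x < 1 -> RInt (rho x) a b =
      g x N - g x (- N) + RInt (kappa x) (- N) N - RInt (rho x) (- N) a - RInt (rho x) b N).
  { intros x Hx. rewrite <- rho_integral by lra.
    assert (Hex : forall c d, ex_RInt (rho x) c d)
      by (intros; apply ex_RInt_continuity; intros; apply rho_continuous; lra).
    rewrite <- (RInt_Chasles_R _ (- N) a N), <- (RInt_Chasles_R _ a b N) by auto. lra. }
  assert (Htails : forall x, 0 < x < 1 ->
      Rabs (RInt (rho x) (- N) a) <= eps / 8 /\ Rabs (RInt (rho x) b N) <= eps / 8).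
  { intros x Hx. split; apply HMA; unfold N in *; lra. }
  assert (Hg : forall x, (x = x1 \/ x = x2) -> Rabs (g x N) < eps / 16 /\ Rabs (g x (- N)) < eps / 16).
  { destruct HN as [HN1 HN2]. intros x [-> | ->]; split;
      [apply G1 | apply G1 | apply G2 | apply G2]; rewrite ?HN1, ?HN2; unfold N; lra. }
  pose proof (HMK (- N) N ltac:(unfold N; lra) ltac:(unfold N; lra) x1 x2 H1 H12 H2) as Hkappa.
  rewrite (Hdecomp x1), (Hdecomp x2) by lra.
  destruct (Htails x1 ltac:(lra)) as [T11 T12]; destruct (Htails x2 ltac:(lra)) as [T21 T22].
  destruct (Hg x1 ltac:(auto)) as [G11 G12]; destruct (Hg x2 ltac:(auto)) as [G21 G22].
  apply Rabs_le_between in T11; apply Rabs_le_between in T12;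
  apply Rabs_le_between in T21; apply Rabs_le_between in T22;
  apply Rabs_def2 in G11; apply Rabs_def2 in G12; apply Rabs_def2 in G21; apply Rabs_def2 in G22.
  lra.
Qed.

Lemma truncated_entropy_continuous a b t : a <= b -> 0 <= t <= 1 ->
  continuous_within (fun s => RInt (entropy_density s) a b) (fun s => 0 <= s <= 1) t.
Proof.
  intros Hab Ht. apply RInt_param_continuous_within; auto.
  - intros y _. unfold entropy_density. continuity_2d.
  - intros s Hs. apply ex_RInt_continuity. intros; apply entropy_density_continuous, Hs.
Qed.

Variable H : R -> R.
Hypothesis HH : forall t, 0 <= t <= 1 -> integral_R (fun x => - (f t x * ln (f t x))) (H t).

Lemma truncated_entropy_approx t eps : 0 <= t <= 1 -> 0 < eps -> exists M,
  forall a b, a <= - M -> M <= b -> Rabs (RInt (entropy_density t) a b - H t) < eps.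
Proof.
  intros Ht He. destruct (HH t Ht eps He) as [M HM]. exists M. intros a b Ha Hb.
  assert (Hex : ex_RInt (entropy_density t) a b).
  { apply ex_RInt_continuity. intros; apply entropy_density_continuous, Ht. }
  pose proof (ex_RInt_Reals_0 _ _ _ Hex) as pr.
  rewrite (RInt_Reals _ _ _ pr). apply HM; auto.
Qed.

(* H is concave: on a large symmetric window the truncated entropy is concave
   up to eps (almost_concave, slope_almost_nonincreasing) and eps-close to H at
   the three relevant times. *)
Lemma entropy_concave : concave_on_01 H.
Proof.
  apply concave_on_01_of_ordered. intros s t l Hs Hst Ht Hl.
  set (m := l * s + (1 - l) * t).
  assert (Hsm : s < m) by (unfold m; nra). assert (Hmt : m < t) by (unfold m; nra).
  apply Rle_plus_epsilon. intros eps He.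
  destruct (slope_almost_nonincreasing (eps / 4) ltac:(lra)) as [M [HM0 HM]].
  destruct (truncated_entropy_approx s (eps / 4) ltac:(lra) ltac:(lra)) as [Ms HMs].
  destruct (truncated_entropy_approx t (eps / 4) ltac:(lra) ltac:(lra)) as [Mt HMt].
  destruct (truncated_entropy_approx m (eps / 4) ltac:(lra) ltac:(lra)) as [Mm HMm].
  set (N := Rabs M + Rabs Ms + Rabs Mt + Rabs Mm).
  pose proof (Rle_abs M); pose proof (Rle_abs Ms); pose proof (Rle_abs Mt); pose proof (Rle_abs Mm).
  pose proof (Rabs_pos M); pose proof (Rabs_pos Ms); pose proof (Rabs_pos Mt); pose proof (Rabs_pos Mm).
  set (A := fun r => RInt (entropy_density r) (- N) N).
  pose proof (almost_concave A (fun r => RInt (rho r) (- N) N) s t l (eps / 4) Hst Hl) as Hconc.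
  specialize (Hconc ltac:(intros; apply entropy_deriv; lra)).
  specialize (Hconc ltac:(intros x Hx;
    apply (continuous_within_sub _ (fun y => 0 <= y <= 1)); [intros; lra|];
    apply truncated_entropy_continuous; unfold N; lra)).
  specialize (Hconc ltac:(intros x1 x2 Hx1 Hx12 Hx2; apply HM; unfold N; lra)).
  fold m in Hconc.
  specialize (HMs (- N) N ltac:(unfold N; lra) ltac:(unfold N; lra)).
  specialize (HMt (- N) N ltac:(unfold N; lra) ltac:(unfold N; lra)).
  specialize (HMm (- N) N ltac:(unfold N; lra) ltac:(unfold N; lra)).
  apply Rabs_def2 in HMs; apply Rabs_def2 in HMt; apply Rabs_def2 in HMm.
  assert (Hw : l * (1 - l) * (t - s) * (eps / 4) <= eps / 4).
  { assert (0 <= l * (1 - l) * (t - s) <= 1) by (split; [apply Rmult_le_pos|]; nra). nra. }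
  unfold A in Hconc. nra.
Qed.

End Entropy.

Theorem theorem2p6
  (f : R -> R -> R) (v : R) (alpha : R -> R)
  (Hsmooth : smooth2 f)
  (Hpos : forall t x, 0 <= t <= 1 -> 0 < f t x)
  (Hprob : forall t, 0 <= t <= 1 -> integral_R (f t) 1)
  (Halpha_C1 : C1_on_R alpha)
  (Halpha_mono : forall s t, 0 <= s <= 1 -> 0 <= t <= 1 -> s <= t -> alpha s <= alpha t) :
  let g := fun t x => v * f t x + alpha t * px f t x in
  let h := fun t x => v ^ 2 * f t x + 2 * v * alpha t * px f t x
                      + alpha t ^ 2 * px (px f) t x - deriv alpha t * f t x in
  (forall t x, 0 <= t <= 1 -> pt f t x = - px g t x) ->
  (exists thetaA thetaB : R -> R,
      integrable_R thetaA /\ integrable_R thetaB /\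
      forall t x, 0 <= t <= 1 ->
        Rabs (px g t x * (1 + ln (f t x))) <= thetaA x /\
        Rabs (px (px h) t x * ln (f t x) + (px g t x) ^ 2 * / f t x) <= thetaB x) ->
  (forall t, 0 <= t <= 1 ->
      vanishes_at_infty (g t) /\
      vanishes_at_infty (fun x => px h t x * ln (f t x)) /\
      vanishes_at_infty (fun x => h t x / f t x * px f t x) /\
      vanishes_at_infty (fun x => (g t x / f t x) ^ 2 * px f t x)) ->
  (forall t, 0 <= t <= 1 -> integrable_R (fun x => f t x * ln (f t x))) ->
  forall H : R -> R,
    (forall t, 0 <= t <= 1 -> integral_R (fun x => - (f t x * ln (f t x))) (H t)) ->
    concave_on_01 H.
Proof.
  intros g h HPDE [thetaA [thetaB [HA [HB Hdom]]]] Hvanish _ H HH.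
  exact (entropy_concave f v alpha Hsmooth Hpos Halpha_C1 Halpha_mono HPDE Hprob
           thetaA thetaB HA HB Hdom Hvanish H HH).
Qed.
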